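(* Let $P_n$ be the path on $n$ vertices. Then $\mathrm{GG}(P_n) \sim \pi\sqrt{n-2}$ as $n \to \infty$, i.e. $\lim_{n\to\infty} \mathrm{GG}(P_n)/(\pi\sqrt{n-2}) = 1$.
   Context: For a connected graph $G$ and an edge $uv$, let $n_u$ (resp. $n_v$) be the number of vertices of $G$ strictly closer (in shortest-path distance) to $u$ than to $v$ (resp. to $v$ than to $u$). The Graovac-Ghorbani index is $\mathrm{GG}(G) = \sum_{uv \in E(G)} \sqrt{\frac{n_u + n_v - 2}{n_u n_v}}$. *)

From HB Require Import structures.
From mathcomp Require Import all_boot all_order all_algebra.
From mathcomp Require Import all_classical all_reals all_analysis.
Set Implicit Arguments. Unset Strict Implicit. Unset Printing Implicit Defensive.
Import Order.TTheory GRing.Theory Num.Theory.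
Local Open Scope ring_scope.

(* A simple graph is a symmetric irreflexive relation e on a finType T. *)

Fixpoint ball (T : finType) (e : rel T) (k : nat) (x : T) : {set T} :=
  match k with
  | 0 => [set x]
  | k'.+1 => ball e k' x :|: [set z | [exists y in ball e k' x, e y z]]
  end.

(* shortest-path distance: least k with y in ball e k x
   (= #|T| if y is unreachable from x, irrelevant for connected graphs). *)
Definition gdist (T : finType) (e : rel T) (x y : T) : nat :=
  #|[set k : 'I_#|T| | y \notin ball e k x]|.

Definition nclose (T : finType) (e : rel T) (u v : T) : nat :=
  #|[set w | (gdist e w u < gdist e w v)%N]|.

(* Graovac-Ghorbani index; each (unordered) edge is counted twice in the
   double sum over ordered adjacent pairs, hence the factor 1/2. *)
Definition GG (R : realType) (T : finType) (e : rel T) : R :=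
  2^-1 * \sum_(u : T) \sum_(v : T | e u v)
    Num.sqrt (((nclose e u v)%:R + (nclose e v u)%:R - 2)
              / ((nclose e u v)%:R * (nclose e v u)%:R)).

Definition path_rel (n : nat) : rel 'I_n :=
  fun i j => (i.+1 == j :> nat) || (j.+1 == i :> nat).

From Pilot Require Import Defs.
From HB Require Import structures.
From mathcomp Require Import all_boot all_order all_algebra.
From mathcomp Require Import all_classical all_reals all_analysis.
From mathcomp Require Import ring lra zify.
Import Order.TTheory GRing.Theory Num.Theory.
Import numFieldNormedType.Exports.

(* On the path P_n the edge {j - 1, j} has n_u = j and n_v = n - j, so
   GG(P_n) = sqrt(n - 2) * sum_(j = 1)^(n - 1) 1 / sqrt(j (n - j)).
   The function theta(t) = acos(1 - 2t/n) has derivative 1 / sqrt(t (n - t)),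
   which decreases on (0, n/2]; by the mean value theorem each summand of the
   first half of the sum is squeezed between consecutive increments of theta,
   so sum_(j = 1)^k lies between theta(k) - theta(1) and theta(k) whenever
   2k <= n.  The symmetry j |-> n - j reduces the second half to the first.
   Since theta(1) -> 0 and theta(k) -> pi/2 for k ~ n/2, the sum tends to pi. *)

Lemma card_ord_lt N D : (D <= N)%N -> #|[set k : 'I_N | (k < D)%N]| = D.
Proof.
move=> DN; rewrite -sum1_card (eq_bigl (fun k : 'I_N => (k < D)%N)) => [|k]; last first.
  by rewrite inE.
by rewrite -(big_ord_widen N (fun _ => 1%N)) // sum1_card card_ord.
Qed.

Section PathGraph.
Variable n : nat.
Local Notation P := (@path_rel n).

Lemma ball_path_rel k (x : 'I_n) : Defs.ball P k x = [set z : 'I_n | (`|z - x| <= k)%N].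
Proof.
elim: k => [|k IH] /=.
  by apply/setP => z; rewrite !inE -val_eqE /=; apply/eqP/idP; lia.
apply/setP => z; rewrite IH !inE; apply/orP/idP => [[|/existsP[y]]|zk].
- lia.
- by rewrite inE /path_rel => /andP[yk /orP[] /eqP]; lia.
have [|far] := leqP `|z - x| k; first by left.
have yn : ((if (x < z)%N then z.-1 else z.+1) < n)%N.
  by have := ltn_ord x; have := ltn_ord z; case: ifP; lia.
right; apply/existsP; exists (Ordinal yn); rewrite inE /path_rel /=.
by case: ifP => xz; apply/andP; split; lia.
Qed.

Lemma gdist_path_rel (x y : 'I_n) : gdist P x y = `|y - x|.
Proof.
rewrite /gdist (_ : [set k | _] = [set k : 'I_#|'I_n| | (k < `|y - x|)%N]).
  by rewrite card_ord_lt // card_ord; have := ltn_ord x; have := ltn_ord y; lia.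
by apply/setP => k; rewrite !inE ball_path_rel inE -ltnNge.
Qed.

Lemma nclose_path_rel (u v : 'I_n) : u.+1 = v ->
  nclose P u v = v /\ nclose P v u = (n - v)%N.
Proof.
move=> uv; have vn := ltn_ord v.
have lowE : [set w | (gdist P w u < gdist P w v)%N] = [set w : 'I_n | (w < v)%N].
  by apply/setP => w; rewrite !inE !gdist_path_rel; lia.
have highE : [set w | (gdist P w v < gdist P w u)%N] = ~: [set w : 'I_n | (w < v)%N].
  by apply/setP => w; rewrite !inE !gdist_path_rel; lia.
have := cardsC [set w : 'I_n | (w < v)%N].
by rewrite /nclose lowE highE card_ord_lt ?card_ord; [lia | exact: ltnW].
Qed.

Local Open Scope ring_scope.
Variable R : realType.

Lemma GG_summand_path_rel (u v : 'I_n) : P u v ->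
  Num.sqrt (((nclose P u v)%:R + (nclose P v u)%:R - 2) /
            ((nclose P u v)%:R * (nclose P v u)%:R)) =
  Num.sqrt ((n%:R - 2) / ((maxn u v)%:R * (n%:R - (maxn u v)%:R))) :> R.
Proof.
case/orP => /eqP uv; have [-> ->] := nclose_path_rel _ _ uv.
- rewrite (maxn_idPr _) -?uv // natrB ?(ltnW (ltn_ord v)) //.
  by congr (Num.sqrt (_ / _)); lra.
- rewrite (maxn_idPl _) -?uv // natrB ?(ltnW (ltn_ord u)) //.
  by congr (Num.sqrt (_ / _)); [lra | ring].
Qed.

Lemma sum_path_rel (F : nat -> R) :
  \sum_(u < n) \sum_(v < n | P u v) F (maxn u v) = 2 * \sum_(1 <= j < n) F j.
Proof.
have inner (u : 'I_n) : \sum_(v < n | P u v) F (maxn u v) =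
    (if (u.+1 < n)%N then F u.+1 else 0) + (if (0 < u)%N then F u else 0).
  rewrite (bigID (fun v : 'I_n => u.+1 == v :> nat)) /=; congr (_ + _).
    rewrite (eq_bigl (fun v : 'I_n => v == u.+1 :> nat)) => [|v]; last first.
      by rewrite /path_rel; apply/idP/idP; lia.
    by rewrite (big_ord1_eq _ (fun j => F (maxn u j))) (maxn_idPr (leqnSn u)).
  rewrite (eq_bigl (fun v : 'I_n => (0 < u)%N && (v == u.-1 :> nat))) => [|v]; last first.
    by rewrite /path_rel; apply/idP/idP; lia.
  rewrite (big_ord1_cond_eq _ (fun j => F (maxn u j)) (fun _ => (0 < u)%N)).
  case: (nat_of_ord u) (ltn_ord u) => [|m] mn; rewrite ?andbF //=.
  by rewrite ltnW // (maxn_idPl (leqnSn m)).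
rewrite (eq_bigr _ (fun u _ => inner u)) big_split /= mulr_natl mulr2n; congr (_ + _).
  rewrite -big_mkcond -(big_mkord (fun u => u.+1 < n)%N (fun u => F u.+1)).
  rewrite big_add1 (big_nat_widen 0 n.-1 n) ?leq_pred //.
  by apply: eq_bigl => i; rewrite ltn_predRL.
rewrite -big_mkcond -(big_mkord (fun u => 0 < u)%N F).
by rewrite (big_nat_widenl 1 0).
Qed.

Lemma GG_path_rel :
  GG R P = \sum_(1 <= j < n) Num.sqrt ((n%:R - 2) / (j%:R * (n%:R - j%:R))).
Proof.
rewrite /GG (eq_bigr _ (fun u _ => eq_bigr _ (GG_summand_path_rel u))).
by rewrite (sum_path_rel (fun j => Num.sqrt ((n%:R - 2) / (j%:R * (n%:R - j%:R))))) mulKf.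
Qed.

End PathGraph.

Local Open Scope classical_set_scope.
Local Open Scope ring_scope.

Section Arccos.
Variable R : realType.
Implicit Types x y : R.

Lemma acos_lt x y : -1 <= y -> y < x -> x <= 1 -> acos x < acos y.
Proof.
move=> y1 yx x1.
have xI : -1 <= x <= 1 by rewrite x1 (le_trans y1) ?ltW.
have yI : -1 <= y <= 1 by rewrite y1 (le_trans _ x1) ?ltW.
have acos_in z : -1 <= z <= 1 -> acos z \in `[0, pi].
  by move=> zI; rewrite in_itv /= acos_ge0 ?acos_lepi.
by rewrite -ltr_cos ?acos_in // !acosK.
Qed.

Lemma acos_le_pi2 x : 0 <= x <= 1 -> acos x <= pi / 2.
Proof.
move=> /andP[]; rewrite le_eqVlt => /predU1P[<- _|x0 x1]; first by rewrite acos0.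
by rewrite -acos0 ltW // acos_lt ?lerN10.
Qed.

(* Mean value theorem for [cos] between [acos x] and [acos y], which lie in
   [[0, pi/2]] where [sin] is increasing. *)
Lemma acos_sub_bounds x y : 0 <= y -> y < x -> x <= 1 ->
  Num.sqrt (1 - x ^+ 2) * (acos y - acos x) <= x - y <=
  Num.sqrt (1 - y ^+ 2) * (acos y - acos x).
Proof.
move=> y0 yx x1; have x0 : 0 <= x by rewrite (le_trans y0) ?ltW.
have y1 : y <= 1 by rewrite (le_trans _ x1) ?ltW.
have xI : -1 <= x <= 1 by rewrite x1 (le_trans _ x0) ?lerN10.
have yI : -1 <= y <= 1 by rewrite y1 (le_trans _ y0) ?lerN10.
have ab : acos x < acos y by rewrite acos_lt ?(le_trans _ y0) ?lerN10.
have [c] := MVT ab (fun z _ => is_derive_cos z)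
  (continuous_subspaceT (@continuous_cos R)).
rewrite in_itv /= => /andP[ac cb] Hc.
have -> : x - y = sin c * (acos y - acos x).
  move: Hc; rewrite !acosK ?in_itv //= mulNr => /eqP.
  by rewrite -opprB eqr_opp => /eqP ->.
have a0 : 0 <= acos x by rewrite acos_ge0.
have bpi : acos y <= pi / 2 by rewrite acos_le_pi2 ?y0.
have in_sin_mono (w : R) : 0 <= w <= pi / 2 -> w \in `[- (pi / 2), pi / 2].
  case/andP=> w0 wpi; rewrite in_itv /= wpi (le_trans _ w0) //.
  by rewrite oppr_le0 divr_ge0 ?pi_ge0.
have aI : 0 <= acos x <= pi / 2 by rewrite a0 (le_trans (ltW ab)).
have bI : 0 <= acos y <= pi / 2 by rewrite bpi (le_trans a0) ?ltW.
have cI : 0 <= c <= pi / 2 by rewrite (le_trans a0) ?(le_trans _ bpi) ?ltW.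
rewrite -!sin_acos // !ler_wpM2r ?subr_ge0 ?(ltW ab) //.
all: by apply: ltW; rewrite ltr_sin ?in_sin_mono.
Qed.

(* [theta N] is an antiderivative of [weight N] on (0, N). *)
Definition theta (N t : R) := acos (1 - 2 * t / N).
Definition weight (N t : R) := (Num.sqrt (t * (N - t)))^-1.

Lemma theta_step (N t : R) : 0 <= t -> 2 * (t + 1) <= N ->
  Num.sqrt (t * (N - t)) * (theta N (t + 1) - theta N t) <= 1 <=
  Num.sqrt ((t + 1) * (N - (t + 1))) * (theta N (t + 1) - theta N t).
Proof.
move=> t0 tN; have N0 : 0 < N by lra.
have sinE s : 0 <= s <= N ->
    Num.sqrt (1 - (1 - 2 * s / N) ^+ 2) = 2 / N * Num.sqrt (s * (N - s)).
  case/andP => s0 sN.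
  have -> : 1 - (1 - 2 * s / N) ^+ 2 = (2 / N) ^+ 2 * (s * (N - s)).
    by field; rewrite gt_eqF.
  by rewrite sqrtrM ?sqr_ge0 // sqrtr_sqr ger0_norm // divr_ge0 // ltW.
have d0 : 0 < 2 / N by rewrite divr_gt0.
have a0 : 0 <= 2 * t / N by rewrite divr_ge0 ?mulr_ge0 // ltW.
have a1 : 2 * (t + 1) / N <= 1 by rewrite ler_pdivrMr // mul1r.
have aE : 2 * (t + 1) / N = 2 * t / N + 2 / N by rewrite mulrDr mulr1 mulrDl.
have y0 : 0 <= 1 - 2 * (t + 1) / N by lra.
have yx : 1 - 2 * (t + 1) / N < 1 - 2 * t / N by lra.
have x1 : 1 - 2 * t / N <= 1 by lra.
have /andP[lo hi] := acos_sub_bounds _ _ y0 yx x1.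
have dE : 1 - 2 * t / N - (1 - 2 * (t + 1) / N) = 2 / N by lra.
rewrite dE -/(theta N t) -/(theta N (t + 1)) !sinE in lo hi; try (apply/andP; split; lra).
set d := 2 / N in d0 lo hi.
rewrite -mulrA -[X in _ <= X]mulr1 ler_pM2l // in lo.
by rewrite -mulrA -[X in X <= _]mulr1 ler_pM2l // in hi; rewrite lo hi.
Qed.

Lemma theta_step_le_weight (N t : R) : 0 < t -> 2 * (t + 1) <= N ->
  theta N (t + 1) - theta N t <= weight N t.
Proof.
move=> t0 tN; have /andP[+ _] := theta_step _ _ (ltW t0) tN.
by rewrite /weight -[_^-1]mulr1 ler_pdivlMl // sqrtr_gt0 mulr_gt0 //; lra.
Qed.

Lemma weight_le_theta_step (N t : R) : 0 <= t -> 2 * (t + 1) <= N ->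
  weight N (t + 1) <= theta N (t + 1) - theta N t.
Proof.
move=> t0 tN; have /andP[_ +] := theta_step _ _ t0 tN.
by rewrite /weight -[_^-1]mulr1 ler_pdivrMl // sqrtr_gt0 mulr_gt0 //; lra.
Qed.

Lemma theta0 N : theta N 0 = 0.
Proof. by rewrite /theta mulr0 mul0r subr0 acos1. Qed.

Lemma weight_ge0 N t : 0 <= weight N t.
Proof. by rewrite invr_ge0 sqrtr_ge0. Qed.

Lemma weightNr N t : weight N (N - t) = weight N t.
Proof. by rewrite /weight subKr mulrC. Qed.

Definition weight_sum (n : nat) := \sum_(1 <= j < n) weight n%:R j%:R.

Lemma weight_sum_half n k : (1 <= k)%N -> (2 * k <= n)%N ->
  theta n%:R k%:R - theta n%:R 1 <= \sum_(1 <= j < k.+1) weight n%:R j%:R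
    <= theta n%:R k%:R.
Proof.
move=> k1 kn.
have cast j : (j < k)%N -> 2 * (j%:R + 1) <= n%:R :> R.
  by move=> jk; rewrite natr1 -natrM ler_nat; lia.
apply/andP; split.
  have -> : theta n%:R k%:R - theta n%:R 1 =
      \sum_(1 <= j < k) (theta n%:R j.+1%:R - theta n%:R j%:R) by rewrite telescope_sumr.
  rewrite big_nat_recr //=.
  rewrite -[X in X <= _]addr0 lerD ?weight_ge0 // ler_sum_nat // => j /andP[j1 jk].
  by rewrite -natr1 theta_step_le_weight ?ltr0n ?cast.
have -> : theta n%:R k%:R = \sum_(0 <= j < k) (theta n%:R j.+1%:R - theta n%:R j%:R).
  by rewrite telescope_sumr // theta0 subr0.
rewrite big_add1 ler_sum_nat // => j /andP[_ jk].
by rewrite -natr1 weight_le_theta_step ?ler0n ?cast.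
Qed.

Lemma weight_sum_split n k : (k < n)%N ->
  weight_sum n =
  \sum_(1 <= j < k.+1) weight n%:R j%:R + \sum_(1 <= j < n - k) weight n%:R j%:R.
Proof.
move=> kn; rewrite /weight_sum (big_cat_nat _ (n := k.+1)) //=; congr (_ + _).
rewrite -add1n big_addn big_nat_rev; apply: eq_big_nat => j /andP[j1 jk].
by rewrite (_ : (1 + (n - k) - j.+1 + k)%N = (n - j)%N) ?natrB ?weightNr //; lia.
Qed.

Lemma cvg_invn : (n%:R : R)^-1 @[n --> \oo] --> 0.
Proof.
apply/gtr0_cvgV0; last exact: cvgr_idn.
by near=> n; rewrite ltr0n; near: n; exact: nbhs_infty_gt.
Unshelve. all: by end_near.
Qed.

Lemma acos_asin x : 0 <= x <= 1 -> acos x = asin (Num.sqrt (1 - x ^+ 2)).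
Proof.
move=> /andP[x0 x1]; have xI : -1 <= x <= 1 by rewrite x1 (le_trans _ x0) ?lerN10.
rewrite -sin_acos // sinK // in_itv /= acos_le_pi2 ?x0 // andbT.
by rewrite (le_trans _ (acos_ge0 xI)) // oppr_le0 divr_ge0 ?pi_ge0.
Qed.

Lemma cvg_acos1 (u : nat -> R) : (\forall n \near \oo, 0 <= u n <= 1) ->
  u @ \oo --> (1 : R) -> acos (u n) @[n --> \oo] --> 0.
Proof.
move=> u01 u1.
have asin0 : asin 0 = 0 :> R.
  by rewrite -{1}sin0 sinK // in_itv /= oppr_le0 divr_ge0 ?pi_ge0.
have : Num.sqrt (1 - u n ^+ 2) @[n --> \oo] --> Num.sqrt (1 - 1 * 1).
  apply: continuous_cvg; first exact: sqrt_continuous.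
  by under eq_fun do rewrite expr2; exact: cvgB (cvg_cst _) (cvgM u1 u1).
rewrite mulr1 subrr sqrtr0.
move=> /(continuous_cvg _ (continuous_asin _)); rewrite asin0 ?ltrN10 ?ltr01 => /(_ isT).
apply: cvg_trans; apply: near_eq_cvg; near=> n.
by rewrite /= acos_asin //; near: n.
Unshelve. all: by end_near.
Qed.

Lemma cvg_theta_one : theta n%:R 1 @[n --> \oo] --> 0.
Proof.
apply: cvg_acos1.
  near=> n; have n2 : (2 : R) <= n%:R.
    by rewrite (ler_nat R 2); near: n; exact: nbhs_infty_ge.
  by rewrite mulr1 subr_ge0 gerBl ler_pdivrMr ?divr_ge0 ?mul1r //; lra.
rewrite -[X in _ --> X]subr0 -(mulr0 (2 * 1)).
exact: cvgB (cvg_cst _) (cvgMl_tmp cvg_invn).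
Unshelve. all: by end_near.
Qed.

Lemma cvg_theta_mid (k : nat -> nat) : (forall n, 2 * k n <= n <= (2 * k n).+2)%N ->
  theta n%:R (k n)%:R @[n --> \oo] --> pi / 2.
Proof.
move=> kP; rewrite /theta -acos0.
apply: continuous_cvg; first by apply: continuous_acos; rewrite ltrN10 ltr01.
apply: (@squeeze_cvgr _ _ _ _ (fun=> 0) (fun n => 2 * n%:R^-1)); last 2 first.
- exact: cvg_cst.
- by rewrite -(mulr0 2); exact: cvgMl_tmp cvg_invn.
near=> n; have n0 : (0 : R) < n%:R by rewrite ltr0n; near: n; exact: nbhs_infty_gt.
have lo : 2 * (k n)%:R <= n%:R :> R by rewrite -natrM ler_nat; have := kP n; lia.
have hi : n%:R <= 2 * (k n)%:R + 2 :> R.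
  by rewrite -natrM -natrD ler_nat; have := kP n; lia.
have -> : 1 - 2 * (k n)%:R / n%:R = (n%:R - 2 * (k n)%:R) / n%:R :> R.
  by field; rewrite gt_eqF.
by rewrite divr_ge0 ?subr_ge0 ?(ltW n0) //= ler_wpM2r ?invr_ge0 ?(ltW n0) //; lra.
Unshelve. all: by end_near.
Qed.

Lemma cvg_weight_sum : weight_sum n @[n --> \oo] --> pi.
Proof.
pose k1 n := n./2; pose k2 n := (n - n./2).-1.
have th1 : theta n%:R (k1 n)%:R @[n --> \oo] --> pi / 2.
  by apply: cvg_theta_mid => n; rewrite /k1; lia.
have th2 : theta n%:R (k2 n)%:R @[n --> \oo] --> pi / 2.
  by apply: cvg_theta_mid => n; rewrite /k2; lia.
apply: (@squeeze_cvgr _ _ _ _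
  (fun n => theta n%:R (k1 n)%:R + theta n%:R (k2 n)%:R - theta n%:R 1 - theta n%:R 1)
  (fun n => theta n%:R (k1 n)%:R + theta n%:R (k2 n)%:R)).
- near=> n; have n3 : (3 <= n)%N by near: n; exact: nbhs_infty_ge.
  have k1n : (k1 n < n)%N by rewrite /k1; lia.
  have k2E : (n - k1 n)%N = (k2 n).+1 by rewrite /k1 /k2; lia.
  rewrite (weight_sum_split _ _ k1n) k2E.
  have [k1_gt0 k1_half] : (0 < k1 n)%N /\ (2 * k1 n <= n)%N by rewrite /k1; lia.
  have [k2_gt0 k2_half] : (0 < k2 n)%N /\ (2 * k2 n <= n)%N by rewrite /k2; lia.
  have /andP[lo1 hi1] := weight_sum_half _ _ k1_gt0 k1_half.
  have /andP[lo2 hi2] := weight_sum_half _ _ k2_gt0 k2_half.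
  by rewrite -addrA addrACA !lerD.
- rewrite [X in _ --> X]splitr -[X in _ --> X]subr0 -[X in _ --> X]subr0.
  exact: cvgB (cvgB (cvgD th1 th2) cvg_theta_one) cvg_theta_one.
- by rewrite [X in _ --> X]splitr; exact: cvgD th1 th2.
Unshelve. all: by end_near.
Qed.

End Arccos.

Lemma GG_path_rel_weight_sum (R : realType) n : (2 <= n)%N ->
  GG R (@path_rel n) = Num.sqrt (n%:R - 2) * weight_sum R n.
Proof.
move=> n2; rewrite GG_path_rel /weight_sum mulr_sumr; apply: eq_big_nat => j /andP[_ jn].
have jI : 0 <= j%:R * (n%:R - j%:R) :> R.
  by rewrite mulr_ge0 ?subr_ge0 ?ler_nat ?(ltnW jn).
by rewrite sqrtrM ?sqrtrV // subr_ge0 (ler_nat R 2).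
Qed.

Theorem corollary4 (R : realType) :
  (fun n : nat => GG R (@path_rel n) / (pi * Num.sqrt (n%:R - 2)))
    @ \oo --> (1 : R).
Proof.
have pi_neq0 : pi != 0 :> R by rewrite gt_eqF ?pi_gt0.
have : weight_sum R n / pi @[n --> \oo] --> (1 : R).
  by rewrite -(mulfV pi_neq0); exact: cvgMr_tmp (cvg_weight_sum R).
apply: cvg_trans; apply: near_eq_cvg; near=> n.
have n3 : (3 <= n)%N by near: n; exact: nbhs_infty_ge.
have s_neq0 : Num.sqrt (n%:R - 2) != 0 :> R.
  by rewrite gt_eqF // sqrtr_gt0 subr_gt0 (ltr_nat R 2).
rewrite /= GG_path_rel_weight_sum 1?ltnW //.
by rewrite [pi * _]mulrC invfM mulrACA mulfV // mul1r.
Unshelve. all: by end_near.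
Qed.
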